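(* Let $e=2$ and $\Lambda=\Lambda_0$. If $\lambda$ is an alternating $2$-regular partition whose last (smallest nonzero) part is odd, then the element $b_\lambda\in B(\Lambda_0)$ labelled by $\lambda$ is external.
   Context: Setting (level one, $e=2$). Let $\mathfrak g$ be the affine Lie algebra of type $A^{(1)}_1$ with simple roots $\alpha_0,\alpha_1$, simple coroots $h_0,h_1$, fundamental weights $\Lambda_0,\Lambda_1$ and null root $\delta=\alpha_0+\alpha_1$. $B(\Lambda_0)$ is the crystal of the irreducible integrable highest weight module $V(\Lambda_0)$, with Kashiwara operators $\tilde e_i,\tilde f_i$ ($i\in\{0,1\}$). Its elements are labelled by $2$-regular partitions (partitions with distinct parts) in the standard Misra–Miwa/Kleshchev realization with the $e$-regular convention: the node in row $x$, column $y$ of a Young diagram has residue $(y-x)\bmod 2$, the weight of $\lambda$ is $\Lambda_0-\sum_{\text{nodes}}\alpha_{\mathrm{res}}$, and $\tilde f_i$ adds a good $i$-node. A $2$-regular partition is \emph{alternating} if the parities of its consecutive nonzero parts alternate between odd and even. For $b\in B(\Lambda)$, the hub of $b$ is $\theta(b)=(\theta_0,\theta_1)$ with $\theta_i=\langle \mathrm{wt}(b),h_i\rangle$. An element $b$ is \emph{external} if for every $i$ with $\theta_i\ge 0$ one has $\tilde e_i(b)=0$. *)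

(* Crystal B(Lambda_0) of type A_1^(1) (e = 2), realized on
   2-regular partitions (Misra--Miwa / Kleshchev, e-regular convention). *)
From HB Require Import structures.
From mathcomp Require Import all_boot all_order all_algebra.
Set Implicit Arguments. Unset Strict Implicit. Unset Printing Implicit Defensive.
Import GRing.Theory Num.Theory.
Local Open Scope ring_scope.
Local Open Scope nat_scope.

(* A partition is a seq of its nonzero parts, weakly decreasing.
   Rows are 1-indexed: [part la r] is the r-th part (0 beyond the end). *)
Definition part (la : seq nat) (r : nat) : nat := nth 0 la r.-1.

Definition is_2regular (la : seq nat) : bool :=
  sorted gtn la && all (fun p => 0 < p) la.

Definition alternating (la : seq nat) : bool :=
  sorted (fun a b => odd a != odd b) la.

Definition res (x y : nat) : nat := absz ((Posz y - Posz x)%R %% Posz 2)%Z.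

Definition nodes (la : seq nat) : seq (nat * nat) :=
  flatten [seq [seq (x, y) | y <- iota 1 (part la x)] | x <- iota 1 (size la)].

Definition Lambda0_h (i : 'I_2) : int := if (i == 0 :> nat) then Posz 1 else Posz 0.

Definition cartan (i j : nat) : int := if i == j then Posz 2 else (- Posz 2)%R.

(* hub: theta_i = <wt(la), h_i>, wt(la) = Lambda_0 - sum_{nodes} alpha_res *)
Definition theta (la : seq nat) (i : 'I_2) : int :=
  (Lambda0_h i - \sum_(n <- nodes la) cartan i (res n.1 n.2))%R.

Definition remi (la : seq nat) (i : nat) (r : nat) : bool :=
  [&& 0 < r, r <= size la, part la r.+1 < part la r & res r (part la r) == i].

Definition addi (la : seq nat) (i : nat) (r : nat) : bool :=
  [&& 0 < r, r <= (size la).+1, (r == 1) || (part la r < part la r.-1)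
    & res r (part la r).+1 == i].

Definition between (s r : nat) : seq nat := iota s.+1 (r - s.+1).

(* Kleshchev: a removable i-node A (in row r) is normal if whenever B is an
   addable i-node above A (in row s < r), there are more removable i-nodes
   between A and B than addable i-nodes between A and B. *)
Definition normal (la : seq nat) (i : nat) (r : nat) : bool :=
  remi la i r &&
  all (fun s => addi la i s ==>
         (count (addi la i) (between s r) < count (remi la i) (between s r)))
      (iota 1 r.-1).

(* Kashiwara operator e~_i: remove the good (= lowest normal) i-node, if any *)
Definition e_tilde (i : 'I_2) (la : seq nat) : option (seq nat) :=
  let rs := [seq r <- iota 1 (size la) | normal la i r] in
  if rs is [::] then None
  else let r := last 0 rs in
       Some (filter (fun p => 0 < p) (set_nth 0 la r.-1 (part la r).-1)).

Definition external (la : seq nat) : Prop :=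
  forall i : 'I_2, (0 <= theta la i)%R -> e_tilde i la = None.

(* Write n for the number of parts.  Alternation and an odd last part force the
   part in row r to have the parity of n - r + 1, so every row ends in a node of
   the same residue j = n + 1 (mod 2).  Hence there is no removable i-node for
   i <> j, and e~_i vanishes.  For i = j, a row contributes alpha_j to the
   weight exactly when its length is odd, and the last row is odd, so
   theta_j <= 1 - 2 < 0. *)
Set Warnings "-notation-overridden -ambiguous-paths".
From mathcomp Require Import all_boot all_order all_algebra zify.
Import Order.TTheory GRing.Theory Num.Theory.

Set Implicit Arguments.
Unset Strict Implicit.

Lemma res_odd x y : res x y = odd (x + y).
Proof.
rewrite /res.
have -> : (Posz y - Posz x = (- Posz x) * 2 + Posz (y + x))%R.
  by rewrite PoszD; lia.
by rewrite modzMDl modz_nat /= modn2 addnC.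
Qed.

Lemma sum_cartan_row (i x p : nat) : i < 2 ->
  (\sum_(y <- iota 1 p) cartan i (res x y) =
    if odd p then cartan i (~~ odd x) else 0)%R.
Proof.
move=> lt_i2; elim: p => [|p IHp]; first by rewrite big_nil.
rewrite -[p.+1]addn1 iotaD big_cat big_seq1 IHp res_odd add1n addnS oddS oddD.
rewrite addn1 oddS.
by case: (odd x); case: (odd p); rewrite /cartan; case: i lt_i2 {IHp} => [|[|]].
Qed.

Lemma theta_rows (la : seq nat) (i : 'I_2) :
  theta la i = (Lambda0_h i -
    \sum_(x <- iota 1 (size la)) if odd (part la x) then cartan i (~~ odd x) else 0)%R.
Proof.
rewrite /theta /nodes big_flatten /= big_map; congr (_ - _)%R.
by apply: eq_bigr => x _; rewrite big_map sum_cartan_row.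
Qed.

Lemma e_tilde_None (i : 'I_2) (la : seq nat) :
  (forall r, ~~ remi la i r) -> e_tilde i la = None.
Proof.
move=> no_remi; rewrite /e_tilde (eq_in_filter (a2 := pred0)) ?filter_pred0 //.
by move=> r _; apply/negbTE; rewrite /normal negb_and no_remi.
Qed.

Section Alternating.

Variable la : seq nat.
Hypothesis la_alt : alternating la.
Hypothesis la_last_odd : odd (last 0 la).

Lemma alternating_odd_nth k : k < size la -> odd (nth 0 la k) = odd (size la - k).
Proof.
elim: la la_alt la_last_odd k => [//|a l IHl] /= alt_al odd_last [|k] lt_k.
- case: l IHl alt_al odd_last {lt_k} => [|b l] IHl /=; first by move=> _ ->.
  case/andP=> ab_alt alt_bl odd_last.
  move: ab_alt; rewrite (IHl alt_bl odd_last 0 erefl) /=.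
  by case: (odd a); case: (odd (size l)).
- case: l IHl alt_al odd_last lt_k => [//|b l] IHl /= /andP[_ alt_bl] odd_last lt_k.
  by rewrite IHl.
Qed.

Lemma alternating_odd_part_add r : 0 < r <= size la ->
  odd (part la r + r) = ~~ odd (size la).
Proof.
move=> /andP[r_gt0 r_le]; rewrite /part oddD alternating_odd_nth; last by lia.
by rewrite -oddD (_ : size la - r.-1 + r = (size la).+1) //; lia.
Qed.

Lemma alternating_res_part r : 0 < r <= size la ->
  res r (part la r) = ~~ odd (size la).
Proof. by move=> r_range; rewrite res_odd addnC alternating_odd_part_add. Qed.

Lemma alternating_remi (i : nat) r : remi la i r -> i = ~~ odd (size la).
Proof.
case/and4P=> r_gt0 r_le _ /eqP <-.
by rewrite alternating_res_part // r_gt0.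
Qed.

Lemma alternating_theta_lt0 (i : 'I_2) : val i = ~~ odd (size la) -> (theta la i < 0)%R.
Proof.
move=> Ei; have n_gt0 : 0 < size la by case: (la) la_last_odd.
have row_term x : x \in iota 1 (size la) ->
    ((if odd (part la x) then cartan i (~~ odd x) else 0) =
      if odd (part la x) then 2 else 0)%R.
  rewrite mem_iota => x_range; case odd_x: (odd (part la x)) => //.
  have -> : ~~ odd x = ~~ odd (size la).
    by rewrite -(@alternating_odd_part_add x) ?oddD ?odd_x //; lia.
  by rewrite -Ei /cartan eqxx.
rewrite theta_rows (eq_big_seq _ row_term).
have -> : iota 1 (size la) = iota 1 (size la).-1 ++ [:: size la].
  by rewrite -{1}(prednK n_gt0) -[(size la).-1.+1]addn1 iotaD add1n prednK.
rewrite big_cat big_seq1 /part nth_last la_last_odd.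
set S := \big[_/_]_(x <- _) _.
have S_ge0 : (0 <= S)%R by apply: sumr_ge0 => x _; case: ifP.
by rewrite /Lambda0_h; case: ifP => _ /=; rewrite -/(S + 2)%R; lia.
Qed.

End Alternating.

Theorem mainTheorem1 (la : seq nat) :
  is_2regular la -> alternating la -> odd (last 0 la) -> external la.
Proof.
move=> _ la_alt la_last_odd i theta_ge0.
case: (eqVneq (val i) (~~ odd (size la))) => [Ei | Ni].
- by have := alternating_theta_lt0 la_alt la_last_odd Ei; rewrite ltNge theta_ge0.
- apply: e_tilde_None => r; apply/negP => /(alternating_remi la_alt la_last_odd) Ei.
  by rewrite -Ei eqxx in Ni.
Qed.
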